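(* Let $\dot P$ be a diverse colored poset and let $n$ be a positive integer. Then $$2n\le \tilde{R}(\dot P,Q_n)\le h(P)\,n+\dim_2(P).$$
   Context: A poset is a set with a reflexive, antisymmetric, transitive relation; its elements are called vertices. $Q_N$ denotes the Boolean lattice of all subsets of an $N$-element set ordered by inclusion. A colored poset $\dot P=(P,c_P)$ is a poset $P$ together with a coloring $c_P\colon P\to\{\text{blue},\text{red}\}$. A (induced) copy of a poset $P$ in a poset $Q$ is the image of an injective map $\phi\colon P\to Q$ with $X\le_P Y$ iff $\phi(X)\le_Q\phi(Y)$. Given a coloring of $Q$, a copy of the colored poset $\dot P$ is an induced copy of $P$ in which each vertex has the same color as the corresponding vertex of $\dot P$. A monochromatic copy of $Q_n$ is an induced copy of $Q_n$ all of whose vertices have the same color. The poset Erdős–Hajnal number $\tilde{R}(\dot P,Q_n)$ is the minimum $N$ such that every blue/red coloring of the vertices of $Q_N$ contains a copy of $\dot P$ or a monochromatic (all blue or all red) induced copy of $Q_n$. $\dot P$ is diverse if it contains two comparable vertices of distinct colors. The height $h(P)$ is the size of a largest chain in $P$, and the 2-dimension $\dim_2(P)$ is the smallest $N$ such that $Q_N$ contains an induced copy of $P$. *)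

From mathcomp Require Import all_boot all_order.
Set Implicit Arguments.
Unset Strict Implicit.
Unset Printing Implicit Defensive.
Import Order.TTheory.
Local Open Scope order_scope.

(* A (finite) poset is a [finPOrderType d]; Q_N is [{set 'I_N}] ordered by
   inclusion [\subset].  A blue/red coloring is a map into [bool]
   (true = blue, false = red). *)

Definition induced_copy (d : Order.disp_t) (P : finPOrderType d) (N : nat)
  (phi : P -> {set 'I_N}) : Prop :=
  injective phi /\ forall x y : P, (x <= y) = (phi x \subset phi y).

Definition cube_copy (n N : nat) (phi : {set 'I_n} -> {set 'I_N}) : Prop :=
  injective phi /\ forall A B : {set 'I_n}, (A \subset B) = (phi A \subset phi B).

Definition contains_colored_copy (d : Order.disp_t) (P : finPOrderType d)
  (c : P -> bool) (N : nat) (col : {set 'I_N} -> bool) : Prop :=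
  exists phi : P -> {set 'I_N},
    induced_copy phi /\ forall x : P, col (phi x) = c x.

Definition contains_mono_cube (n N : nat) (col : {set 'I_N} -> bool) : Prop :=
  exists (b : bool) (phi : {set 'I_n} -> {set 'I_N}),
    cube_copy phi /\ forall A : {set 'I_n}, col (phi A) = b.

Definition EH_property (d : Order.disp_t) (P : finPOrderType d)
  (c : P -> bool) (n N : nat) : Prop :=
  forall col : {set 'I_N} -> bool,
    contains_colored_copy c col \/ contains_mono_cube n col.

Definition is_EH_number (d : Order.disp_t) (P : finPOrderType d)
  (c : P -> bool) (n R : nat) : Prop :=
  EH_property c n R /\ forall N, EH_property c n N -> (R <= N)%N.

Definition diverse (d : Order.disp_t) (P : finPOrderType d) (c : P -> bool) : Prop :=
  exists x y : P, ((x <= y) || (y <= x)) /\ c x != c y.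

Definition is_chain (d : Order.disp_t) (P : finPOrderType d) (S : {set P}) : bool :=
  [forall x in S, forall y in S, (x <= y) || (y <= x)].

Definition height (d : Order.disp_t) (P : finPOrderType d) : nat :=
  (\max_(S : {set P} | is_chain S) #|S|)%N.

Definition is_dim2 (d : Order.disp_t) (P : finPOrderType d) (D : nat) : Prop :=
  (exists phi : P -> {set 'I_D}, induced_copy phi) /\
  forall N, (exists phi : P -> {set 'I_N}, induced_copy phi) -> (D <= N)%N.

From mathcomp Require Import all_boot all_order.
From Stdlib Require Import Classical Wf_nat.
Set Implicit Arguments.
Unset Strict Implicit.
Unset Printing Implicit Defensive.
Import Order.TTheory.

(* Lower bound: take [x <= y] of distinct colors and color a set with the
   color of [x] if it has at least [n] elements and with that of [y]
   otherwise.  Cardinality grows along inclusions, so [x] and [y] cannot both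
   get their own colors; and a copy of [Q_n] climbs [n] strict inclusions
   from its bottom to its top, so it is monochromatic only if [N >= 2n].

   Upper bound: split [h(P) n + D] coordinates into [D] carrying an embedding
   [phi0] of [P] and [h(P)] blocks of [n].  Let [r x < h(P)] be the size of a
   longest chain strictly below [x].  The sets [phi0 x], plus all blocks
   below block [r x], plus any subset of block [r x], form a copy of [Q_n].
   If one of these copies avoids the color of [x] it is monochromatic;
   otherwise picking in every copy a set of the color of [x] yields a copy
   of [P]: [x < y] forces [r x < r y], so the whole block of [x] lies below
   the set of [y], while the first [D] coordinates recover [phi0]. *)

Lemma exists_least_nat (p : nat -> Prop) (m : nat) :
  p m -> exists r, p r /\ forall k, p k -> r <= k.
Proof.
move=> pm.
have [r [[pr r_min] _]] :=
  dec_inh_nat_subset_has_unique_least_element p (fun k => classic (p k))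
    (ex_intro p m pm).
by exists r; split=> // k /r_min /ssrnat.leP.
Qed.

Section CubeCopies.

Variables (n N : nat) (phi : {set 'I_n} -> {set 'I_N}).
Hypothesis phi_cube : cube_copy phi.

Lemma cube_copy_proper (A B : {set 'I_n}) :
  (A \proper B) = (phi A \proper phi B).
Proof. by case: phi_cube => _ phi_sub; rewrite !properE -!phi_sub. Qed.

Lemma cube_copy_card (A : {set 'I_n}) : #|phi set0| + #|A| <= #|phi A|.
Proof.
move cardA: #|A| => k; elim: k A cardA => [|k IHk] A cardA.
  by case: phi_cube => _ phi_sub; rewrite addn0 subset_leq_card // -phi_sub sub0set.
have /card_gt0P [a aA] : 0 < #|A| by rewrite cardA.
have cardAa : #|A :\ a| = k by apply/succn_inj; rewrite -cardA (cardsD1 a A) aA.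
rewrite addnS; apply: leq_ltn_trans (IHk _ cardAa) _.
by apply: proper_card; rewrite -cube_copy_proper properD1.
Qed.

Lemma cube_copy_card_top : #|phi set0| + n <= #|phi setT|.
Proof. by have := cube_copy_card setT; rewrite cardsT card_ord. Qed.

End CubeCopies.

Lemma cube_copy_shift n N (Z : {set 'I_N}) (f : 'I_n -> 'I_N) :
  injective f -> (forall j, f j \notin Z) -> cube_copy (fun A => Z :|: f @: A).
Proof.
move=> f_inj fZ.
have shift_sub (A B : {set 'I_n}) : (A \subset B) = (Z :|: f @: A \subset Z :|: f @: B).
  apply/idP/idP => [sAB | /subsetP sAB]; first by rewrite setUS // imsetS.
  apply/subsetP => j jA.
  have /sAB : f j \in Z :|: f @: A by rewrite in_setU imset_f ?orbT.
  by rewrite in_setU (negbTE (fZ j)) (mem_imset _ _ f_inj).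
split=> // A B eqAB.
by apply/eqP; rewrite eqEsubset !shift_sub eqAB subxx.
Qed.

Definition threshold_coloring (N n : nat) (small large : bool) (A : {set 'I_N}) :=
  if n <= #|A| then large else small.

Lemma threshold_coloring_no_copy d (P : finPOrderType d) (c : P -> bool) N n
    (x y : P) :
  (x <= y)%O -> c x != c y ->
  ~ contains_colored_copy c (@threshold_coloring N n (c y) (c x)).
Proof.
move=> le_xy /negPf cxy [phi [[_ phi_le] phi_col]].
have sub_xy : phi x \subset phi y by rewrite -phi_le.
move: (phi_col x) (phi_col y); rewrite /threshold_coloring.
have [large_x _ | _ /eqP] := leqP n #|phi x|; last by rewrite eq_sym cxy.
by rewrite (leq_trans large_x (subset_leq_card sub_xy)) => /eqP; rewrite cxy.
Qed.

Lemma threshold_coloring_no_mono_cube N n (small large : bool) :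
  small != large -> N < 2 * n ->
  ~ contains_mono_cube n (@threshold_coloring N n small large).
Proof.
move=> small_large ltN [b [phi [phi_cube phi_col]]].
have card_top := cube_copy_card_top phi_cube.
have top_le_N : #|phi setT| <= N by have := max_card (phi setT); rewrite card_ord.
have small_bot : #|phi set0| < n.
  rewrite ltnNge; apply/negP => large_bot.
  have := leq_trans (leq_add large_bot (leqnn n)) (leq_trans card_top top_le_N).
  by rewrite addnn -mul2n leqNgt ltN.
have large_top : n <= #|phi setT| by apply: leq_trans card_top; rewrite leq_addl.
move: (phi_col set0) (phi_col setT); rewrite /threshold_coloring.
rewrite leqNgt small_bot large_top /= => <- large_small.
by rewrite large_small eqxx in small_large.
Qed.

Lemma EH_property_lower_bound d (P : finPOrderType d) (c : P -> bool) n N :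
  diverse c -> EH_property c n N -> 2 * n <= N.
Proof.
case=> x [y [cmp_xy cxy]] EH; rewrite leqNgt; apply/negP => ltN.
wlog le_xy : x y cxy {cmp_xy} / (x <= y)%O.
  move=> W; case/orP: cmp_xy => [le_xy|le_yx]; first exact: (W x y).
  by apply: (W y x) => //; rewrite eq_sym.
case: (EH (threshold_coloring n (c y) (c x))).
  exact: threshold_coloring_no_copy.
by apply: threshold_coloring_no_mono_cube; rewrite // eq_sym.
Qed.

Section Rank.

Variables (d : Order.disp_t) (P : finPOrderType d).

Definition chain_below (x : P) (S : {set P}) :=
  is_chain S && (S \subset [set y | (y < x)%O]).

Definition rank (x : P) := \max_(S | chain_below x S) #|S|.

Lemma chain_below0 (x : P) : chain_below x set0.
Proof. by rewrite /chain_below sub0set andbT; apply/forall_inP => y; rewrite inE. Qed.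

Lemma chain_below_rank (x : P) : exists2 S, chain_below x S & rank x = #|S|.
Proof.
have /(eq_bigmax_cond (fun S : {set P} => #|S|)) [S xS max_S] :
    0 < #|[pred S | chain_below x S]|.
  by apply/card_gt0P; exists set0; rewrite inE chain_below0.
by exists S; rewrite // /rank max_S.
Qed.

Lemma chain_below_setU1 (x : P) (S : {set P}) :
  chain_below x S -> is_chain (x |: S) /\ x \notin S.
Proof.
case/andP => S_chain /subsetP S_lt.
have S_le y : y \in S -> (y <= x)%O by move/S_lt; rewrite inE => /ltW.
split; last by apply/negP => /S_lt; rewrite inE ltxx.
apply/forall_inP => u; rewrite in_setU1 => /predU1P [-> | uS];
  apply/forall_inP => v; rewrite in_setU1 => /predU1P [-> | vS].
- by rewrite lexx.
- by rewrite S_le ?orbT.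
- by rewrite S_le.
- exact: (forall_inP (forall_inP S_chain u uS) v vS).
Qed.

Lemma rank_lt_height (x : P) : rank x < height P.
Proof.
have [S xS ->] := chain_below_rank x.
have [xS_chain xNS] := chain_below_setU1 xS.
have -> : #|S|.+1 = #|x |: S| by rewrite cardsU1 xNS.
exact: (@leq_bigmax_cond _ (@is_chain _ P) (fun S => #|S|) _ xS_chain).
Qed.

Lemma rank_lt (x y : P) : (x < y)%O -> rank x < rank y.
Proof.
move=> lt_xy; have [S xS ->] := chain_below_rank x.
have [xS_chain xNS] := chain_below_setU1 xS.
have yxS : chain_below y (x |: S).
  rewrite /chain_below xS_chain; apply/subsetP => u; rewrite in_setU1 !inE.
  case/predU1P => [-> // | uS]; apply: lt_trans lt_xy.
  by have := subsetP (proj2 (andP xS)) u uS; rewrite inE.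
have -> : #|S|.+1 = #|x |: S| by rewrite cardsU1 xNS.
exact: (@leq_bigmax_cond _ (chain_below y) (fun S => #|S|) _ yxS).
Qed.

End Rank.

Section LayeredCopy.

Variables (d : Order.disp_t) (P : finPOrderType d) (n D N : nat).
Variable phi0 : P -> {set 'I_D}.
Hypothesis phi0_copy : induced_copy phi0.
Hypothesis le_N : height P * n + D <= N.

Definition block_start (x : P) := D + rank x * n.

Lemma block_end_le (x : P) : block_start x + n <= N.
Proof.
apply: leq_trans le_N; rewrite /block_start -addnA addnC leq_add2r -mulSnr.
by rewrite leq_mul2r rank_lt_height orbT.
Qed.

Lemma D_le_N : D <= N.
Proof. by apply: leq_trans le_N; rewrite leq_addl. Qed.

Definition base_coord : 'I_D -> 'I_N := widen_ord D_le_N.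

Lemma block_coord_lt (x : P) (j : 'I_n) : block_start x + j < N.
Proof. by apply: leq_trans (block_end_le x); rewrite ltn_add2l. Qed.

Definition block_coord (x : P) (j : 'I_n) : 'I_N := Ordinal (block_coord_lt x j).

Definition lower_blocks (x : P) := [set i : 'I_N | D <= i < block_start x].

Definition layer_set (x : P) (A : {set 'I_n}) :=
  base_coord @: phi0 x :|: lower_blocks x :|: block_coord x @: A.

Lemma val_base_coord (j : 'I_D) : val (base_coord j) = j.
Proof. by []. Qed.

Lemma base_coord_inj : injective base_coord.
Proof. by move=> i j /(congr1 val); rewrite !val_base_coord => /val_inj. Qed.

Lemma val_block_coord (x : P) (j : 'I_n) : val (block_coord x j) = block_start x + j.
Proof. by []. Qed.

Lemma block_coord_inj (x : P) : injective (block_coord x).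
Proof. by move=> j k /(congr1 val); rewrite !val_block_coord => /addnI /val_inj. Qed.

Lemma D_le_block_start (x : P) : D <= block_start x.
Proof. exact: leq_addr. Qed.

Lemma mem_base_coord (S : {set 'I_D}) (i : 'I_N) : i \in base_coord @: S -> i < D.
Proof. by case/imsetP => j _ ->; rewrite val_base_coord ltn_ord. Qed.

Lemma mem_block_coord (x : P) (A : {set 'I_n}) (i : 'I_N) :
  i \in block_coord x @: A -> block_start x <= i < block_start x + n.
Proof. by case/imsetP => j _ ->; rewrite val_block_coord leq_addr ltn_add2l ltn_ord. Qed.

Lemma layer_set_cube (x : P) : cube_copy (layer_set x).
Proof.
apply: cube_copy_shift; first exact: block_coord_inj.
move=> j; rewrite in_setU inE val_block_coord ltnNge leq_addr andbF orbF.
apply/negP => /mem_base_coord; rewrite val_block_coord ltnNge.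
by rewrite (leq_trans (D_le_block_start x)) ?leq_addr.
Qed.

Lemma base_coord_in_layer_set (x : P) (A : {set 'I_n}) (j : 'I_D) :
  (base_coord j \in layer_set x A) = (j \in phi0 x).
Proof.
rewrite !in_setU (mem_imset _ _ base_coord_inj) inE val_base_coord leqNgt ltn_ord orbF.
case: (boolP (_ \in block_coord x @: A)) => [/mem_block_coord | _]; last by rewrite orbF.
by rewrite val_base_coord leqNgt (leq_trans (ltn_ord j) (D_le_block_start x)).
Qed.

Lemma layer_set_subset (x y : P) (A B : {set 'I_n}) :
  (x < y)%O -> layer_set x A \subset layer_set y B.
Proof.
move=> lt_xy.
have x_below_y : block_start x + n <= block_start y.
  by rewrite /block_start -addnA leq_add2l -mulSnr leq_mul2r rank_lt ?orbT.
have sub_xy : phi0 x \subset phi0 y by case: phi0_copy => _ <-; rewrite ltW.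
apply/subsetP => i; rewrite !in_setU => /orP [/orP [base_i | lower_i] | /mem_block_coord].
- by rewrite (subsetP (imsetS _ sub_xy) _ base_i).
- move: lower_i; rewrite !inE => /andP [D_le_i lt_i].
  by rewrite D_le_i (leq_trans lt_i (leq_trans (leq_addr n _) x_below_y)) orbT.
- case/andP => start_i lt_i; rewrite inE (leq_trans (D_le_block_start x) start_i).
  by rewrite (leq_trans lt_i x_below_y) orbT.
Qed.

Lemma layer_set_copy (A : P -> {set 'I_n}) :
  induced_copy (fun x => layer_set x (A x)).
Proof.
have layer_le x y : (x <= y)%O = (layer_set x (A x) \subset layer_set y (A y)).
  apply/idP/idP => [|sub_xy]; last first.
    case: phi0_copy => _ ->; apply/subsetP => j jx.
    rewrite -(base_coord_in_layer_set y (A y)); apply: (subsetP sub_xy).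
    by rewrite base_coord_in_layer_set.
  by rewrite le_eqVlt => /predU1P [-> | /layer_set_subset //]; rewrite subxx.
by split=> // x y eq_xy; apply/le_anti; rewrite !layer_le eq_xy subxx.
Qed.

End LayeredCopy.

Lemma EH_property_upper_bound d (P : finPOrderType d) (c : P -> bool) n D N
    (phi0 : P -> {set 'I_D}) :
  induced_copy phi0 -> height P * n + D <= N -> EH_property c n N.
Proof.
move=> phi0_copy le_N col.
pose layer := layer_set phi0 le_N.
case: (boolP [forall x, [exists A, col (layer x A) == c x]]) => [/forallP good | ].
  have /fin_all_exists [A colA] : forall x, exists A, col (layer x A) = c x.
    by move=> x; have /existsP [A /eqP] := good x; exists A.
  by left; exists (fun x => layer x (A x)); split=> //; apply: layer_set_copy.
case/forallPn => x /existsPn bad; right; exists (~~ c x), (layer x).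
split; first exact: layer_set_cube.
by move=> A; have := bad A; case: (col _); case: (c x).
Qed.

Theorem theorem1 (d : Order.disp_t) (P : finPOrderType d) (c : P -> bool)
  (n D : nat) :
  diverse c -> 0 < n -> is_dim2 P D ->
  exists R : nat, is_EH_number c n R /\ 2 * n <= R <= height P * n + D.
Proof.
(* Neither bound uses [0 < n], and any embedding of [P] into [Q_D] will do. *)
move=> diverse_c _ [[phi0 phi0_copy] _].
have EH_upper := EH_property_upper_bound c phi0_copy (leqnn (height P * n + D)).
have [R [EH_R R_min]] := exists_least_nat EH_upper.
exists R; split; first by split.
by rewrite (EH_property_lower_bound diverse_c EH_R) R_min.
Qed.
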